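(* Let $s,t\in\mathbb{N}$ and $\varepsilon,k,m>0$. The following are equivalent, where each group is considered with the generating set $\{a,b\}$ of its standard presentation: (1) $BS(s,t)$ is $\varepsilon$-densely $(k,m)$-chordal; (2) $BS(-s,t)$ is; (3) $BS(s,-t)$ is; (4) $BS(-s,-t)$ is; (5) $BS(t,s)$ is; (6) $BS(-t,s)$ is; (7) $BS(t,-s)$ is; (8) $BS(-t,-s)$ is.
   Context: For integers $p,q$, $BS(p,q)=\langle a,b\mid ba^pb^{-1}=a^q\rangle$. A group is called $\varepsilon$-densely $(k,m)$-chordal if its Cayley graph with respect to $\{a,b\}$ (vertices the group elements, edges $\{g,gs\}$ for $s\in\{a^{\pm1},b^{\pm1}\}$, each edge of length 1) is. A cycle is a simple closed path (length at least 3); $L$ denotes length and $d_\gamma$ the length metric on the cycle $\gamma$. A shortcut in $\gamma$ is a path $\sigma$ joining vertices $p,q$ of $\gamma$ with $L(\sigma)<d_\gamma(p,q)$; it is strict if $\sigma\cap\gamma=\{p,q\}$, and $p,q$ are its associated shortcut vertices. A graph is $\varepsilon$-densely $(k,m)$-chordal if for every cycle $\gamma$ with $L(\gamma)\ge k$ there are strict shortcuts $\sigma_1,\dots,\sigma_r$ with $L(\sigma_i)\le m$ whose associated shortcut vertices form an $\varepsilon$-dense subset of $(\gamma,d_\gamma)$. *)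

From Stdlib Require Import Reals Lra ZArith List Relations.
Import ListNotations.
Open Scope R_scope.

Fixpoint chain {V : Type} (adj : V -> V -> Prop) (x : V) (l : list V) : Prop :=
  match l with
  | nil => True
  | y :: l' => adj x y /\ chain adj y l'
  end.

(* A cycle: a simple closed path, given by its cyclic vertex list
   [v_0; ...; v_{n-1}], n >= 3, pairwise distinct, v_i ~ v_{i+1}, v_{n-1} ~ v_0.
   Each edge has length 1, so L(c) = n = length c. *)
Definition is_cycle {V : Type} (adj : V -> V -> Prop) (c : list V) : Prop :=
  (3 <= length c)%nat /\ NoDup c /\
  match c with
  | nil => False
  | x :: rest => chain adj x rest /\ adj (last rest x) x
  end.

(* Length metric on a cycle of length n, points parametrized by arc length
   in [0, n); the vertex v_i sits at position i. *)
Definition dcyc (n : nat) (x y : R) : R :=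
  Rmin (Rabs (x - y)) (INR n - Rabs (x - y)).

(* A strict shortcut in the cycle c, given by the indices i, j of its
   endpoints p = c_i, q = c_j and the list l of its interior vertices,
   i.e. sigma = p :: l ++ [q], of length L(sigma) = length l + 1. *)
Definition strict_shortcut {V : Type} (adj : V -> V -> Prop) (c : list V)
    (i j : nat) (l : list V) : Prop :=
  exists d : V,
  (i < length c)%nat /\ (j < length c)%nat /\
  chain adj (nth i c d) (l ++ [nth j c d]) /\
  INR (length l + 1) < dcyc (length c) (INR i) (INR j) /\
  (forall v, In v l -> ~ In v c).

Definition dense_chordal {V : Type} (adj : V -> V -> Prop) (eps k m : R) : Prop :=
  forall c : list V, is_cycle adj c -> k <= INR (length c) ->
  exists sc : list (nat * nat * list V),
    (forall i j l, In (i, j, l) sc ->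
        strict_shortcut adj c i j l /\ INR (length l + 1) <= m) /\
    (forall x : R, 0 <= x < INR (length c) ->
       exists i j l, In (i, j, l) sc /\
         (dcyc (length c) x (INR i) <= eps \/ dcyc (length c) x (INR j) <= eps)).

Inductive gen := ga | gA | gb | gB.   (* a, a^-1, b, b^-1 *)

Definition ginv (x : gen) : gen :=
  match x with ga => gA | gA => ga | gb => gB | gB => gb end.

Definition word := list gen.

Definition apow (z : Z) : word :=
  if (0 <=? z)%Z then repeat ga (Z.to_nat z) else repeat gA (Z.to_nat (- z)).

(* relator of BS(p,q) = < a, b | b a^p b^-1 = a^q > : b a^p b^-1 a^-q *)
Definition bs_rel (p q : Z) : word := [gb] ++ apow p ++ [gB] ++ apow (- q).

Inductive wstep (r : word) : word -> word -> Prop :=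
| ws_free (u v : word) (x : gen) : wstep r (u ++ x :: ginv x :: v) (u ++ v)
| ws_rel (u v : word) : wstep r (u ++ r ++ v) (u ++ v).

Definition weq (r : word) : word -> word -> Prop :=
  clos_refl_sym_trans word (wstep r).

Definition BS (p q : Z) : Type :=
  { S : word -> Prop | exists w : word, S = weq (bs_rel p q) w }.

Definition cls (p q : Z) (w : word) : BS p q :=
  exist _ (weq (bs_rel p q) w) (ex_intro _ w eq_refl).

(* Cayley graph w.r.t. {a,b}: edges {g, g s}, s in {a^±1, b^±1} (simple graph) *)
Definition cayley_adj (p q : Z) (g h : BS p q) : Prop :=
  g <> h /\ exists (w : word) (s : gen), g = cls p q w /\ h = cls p q (w ++ [s]).

Definition BS_dense_chordal (p q : Z) (eps k m : R) : Prop :=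
  dense_chordal (cayley_adj p q) eps k m.

(* Dense chordality only depends on the Cayley graph up to isomorphism, and
   the moves (p,q) -> (q,p) and (p,q) -> (-p,q) generate all eight parameter
   changes, so it suffices to give Cayley graph isomorphisms for these two.
   Swapping b with b^-1 is a group isomorphism BS(p,q) ~ BS(q,p).  Inverting
   every letter a^{+-1} preceded by an odd number of letters b^{+-1} is not a
   homomorphism, but it maps words equal in BS(p,q) to words equal in
   BS(-p,q), since it turns the relator b a^p b^-1 a^-q into b a^-p b^-1 a^-q
   or into a conjugate of its inverse; being an involution compatible with
   right multiplication by generators, it induces a Cayley graph isomorphism. *)

From Stdlib Require Import Reals ZArith.
From Stdlib Require Import List Relations Lia FinFun
  FunctionalExtensionality PropExtensionality ProofIrrelevance ClassicalEpsilon.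
Import ListNotations.
Open Scope R_scope.

Lemma chain_map {U W : Type} (a : U -> U -> Prop) (b : W -> W -> Prop) (h : U -> W) :
  (forall x y, a x y -> b (h x) (h y)) ->
  forall x l, chain a x l -> chain b (h x) (map h l).
Proof. intros Hh x l; revert x; induction l; simpl; intuition. Qed.

Lemma last_map {U W : Type} (h : U -> W) (l : list U) x :
  last (map h l) (h x) = h (last l x).
Proof.
  revert x; induction l as [|y l IH]; intros x; [reflexivity|].
  destruct l; [reflexivity|]. exact (IH x).
Qed.

Section GraphIsomorphism.

Context {V1 V2 : Type} (adj1 : V1 -> V1 -> Prop) (adj2 : V2 -> V2 -> Prop).
Context (f : V1 -> V2) (g : V2 -> V1).
Hypothesis fK : forall x, g (f x) = x.
Hypothesis gK : forall y, f (g y) = y.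
Hypothesis f_adj : forall x y, adj1 x y -> adj2 (f x) (f y).
Hypothesis g_adj : forall x y, adj2 x y -> adj1 (g x) (g y).

Lemma is_cycle_map (c : list V2) : is_cycle adj2 c -> is_cycle adj1 (map g c).
Proof.
  intros [Hlen [Hnd Hch]]; split; [|split].
  - now rewrite length_map.
  - apply Injective_map_NoDup; [|exact Hnd].
    intros x y E; now rewrite <- (gK x), <- (gK y), E.
  - destruct c as [|x rest]; [contradiction|].
    destruct Hch as [Hrest Hclose]; split.
    + exact (chain_map _ _ g g_adj x rest Hrest).
    + rewrite last_map; exact (g_adj _ _ Hclose).
Qed.

Lemma strict_shortcut_map (c : list V2) i j l :
  strict_shortcut adj1 (map g c) i j l -> strict_shortcut adj2 c i j (map f l).
Proof.
  intros [d [Hi [Hj [Hch [Hshort Hout]]]]]; rewrite length_map in *.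
  exists (f d); repeat split; [exact Hi|exact Hj| | |].
  - rewrite <- (fK d), !map_nth in Hch.
    apply (chain_map _ _ f f_adj) in Hch.
    rewrite map_app in Hch; simpl in Hch; now rewrite !gK in Hch.
  - now rewrite length_map.
  - intros v Hv Hvc; apply in_map_iff in Hv as [u [<- Hu]].
    apply (Hout u Hu); rewrite <- (fK u); now apply in_map.
Qed.

Lemma dense_chordal_iso eps k m :
  dense_chordal adj1 eps k m -> dense_chordal adj2 eps k m.
Proof.
  intros D c Hc Hk.
  destruct (D (map g c)) as [sc [Hsc Hdense]];
    [now apply is_cycle_map|now rewrite length_map|].
  rewrite length_map in Hdense.
  exists (map (fun '(i, j, l) => (i, j, map f l)) sc); split.
  - intros i j l Hin; apply in_map_iff in Hin as [[[i1 j1] l1] [E Hin]].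
    injection E as <- <- <-.
    destruct (Hsc _ _ _ Hin) as [Hs Hm].
    split; [now apply strict_shortcut_map|now rewrite length_map].
  - intros x Hx; destruct (Hdense x Hx) as [i [j [l [Hin Hd]]]].
    exists i, j, (map f l); split; [|exact Hd].
    apply in_map_iff; now exists (i, j, l).
Qed.

End GraphIsomorphism.

Definition winv (w : word) : word := rev (map ginv w).

Lemma ginvK x : ginv (ginv x) = x.
Proof. now destruct x. Qed.

Lemma winv_app u v : winv (u ++ v) = winv v ++ winv u.
Proof. unfold winv; now rewrite map_app, rev_app_distr. Qed.

Lemma winvK u : winv (winv u) = u.
Proof.
  unfold winv; rewrite map_rev, rev_involutive, map_map.
  rewrite (map_ext _ (fun x => x)) by apply ginvK; apply map_id.
Qed.

Lemma winv_apow z : winv (apow z) = apow (- z).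
Proof.
  unfold winv, apow.
  destruct (Z.leb_spec 0 z), (Z.leb_spec 0 (- z));
    rewrite map_repeat, rev_repeat, ?Z.opp_involutive; try reflexivity; [|lia].
  now replace z with 0%Z by lia.
Qed.

Lemma apow_nonneg z : (0 <= z)%Z -> apow z = repeat ga (Z.to_nat z).
Proof. intros Hz; unfold apow; now rewrite (proj2 (Z.leb_le _ _) Hz). Qed.

Lemma apow_nonpos z : (z <= 0)%Z -> apow z = repeat gA (Z.to_nat (- z)).
Proof.
  intros Hz; unfold apow; destruct (Z.leb_spec 0 z); [|reflexivity].
  now replace z with 0%Z by lia.
Qed.

Section WordEquivalence.

Variable r : word.

Lemma wstep_ctx a b u v : wstep r u v -> wstep r (a ++ u ++ b) (a ++ v ++ b).
Proof.
  intros [u' v' x|u' v'];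
    replace (a ++ (u' ++ v') ++ b) with ((a ++ u') ++ v' ++ b)
      by now rewrite <- !app_assoc.
  - replace (a ++ (u' ++ x :: ginv x :: v') ++ b)
      with ((a ++ u') ++ x :: ginv x :: v' ++ b) by now rewrite <- !app_assoc.
    apply ws_free.
  - replace (a ++ (u' ++ r ++ v') ++ b) with ((a ++ u') ++ r ++ v' ++ b)
      by now rewrite <- !app_assoc.
    apply ws_rel.
Qed.

Lemma weq_ctx a b u v : weq r u v -> weq r (a ++ u ++ b) (a ++ v ++ b).
Proof.
  induction 1.
  - now apply rst_step, wstep_ctx.
  - apply rst_refl.
  - now apply rst_sym.
  - eapply rst_trans; eauto.
Qed.

Lemma weq_app u u' v v' : weq r u u' -> weq r v v' -> weq r (u ++ v) (u' ++ v').
Proof.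
  intros Hu Hv; apply rst_trans with (u' ++ v).
  - exact (weq_ctx [] v u u' Hu).
  - pose proof (weq_ctx u' [] v v' Hv) as H; now rewrite !app_nil_r in H.
Qed.

Lemma weq_winv_l u : weq r (winv u ++ u) [].
Proof.
  induction u as [|x u IH]; [apply rst_refl|].
  eapply rst_trans; [|exact IH]; apply rst_step.
  unfold winv; simpl; rewrite <- app_assoc; simpl.
  rewrite <- (ginvK x) at 2; apply ws_free.
Qed.

Lemma weq_winv_r u : weq r (u ++ winv u) [].
Proof. rewrite <- (winvK u) at 1; apply weq_winv_l. Qed.

Lemma weq_nil_winv w : weq r w [] -> weq r (winv w) [].
Proof.
  intros H; apply rst_trans with (winv w ++ w); [|apply weq_winv_l].
  rewrite <- (app_nil_r (winv w)) at 1.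
  apply weq_app; [apply rst_refl|now apply rst_sym].
Qed.

Lemma weq_nil_rot u v : weq r (u ++ v) [] -> weq r (v ++ u) [].
Proof.
  intros H; apply rst_trans with (v ++ (u ++ v) ++ winv v).
  - replace (v ++ (u ++ v) ++ winv v) with ((v ++ u) ++ v ++ winv v)
      by now rewrite <- !app_assoc.
    rewrite <- (app_nil_r (v ++ u)) at 1.
    apply weq_app; [apply rst_refl|apply rst_sym, weq_winv_r].
  - apply rst_trans with (v ++ [] ++ winv v); [now apply weq_ctx|apply weq_winv_r].
Qed.

End WordEquivalence.

Lemma weq_bs_rel p q : weq (bs_rel p q) (bs_rel p q) [].
Proof.
  apply rst_step; pose proof (ws_rel (bs_rel p q) [] []) as H.
  now rewrite app_nil_r in H.
Qed.

(* [bs_rel (-p) (-q)] is a cyclic rotation of the inverse of [bs_rel p q]. *)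
Lemma weq_bs_rel_opp p q : weq (bs_rel p q) (bs_rel (- p) (- q)) [].
Proof.
  pose proof (weq_nil_winv _ _ (weq_bs_rel p q)) as H.
  unfold bs_rel in *; rewrite !winv_app, !winv_apow, Z.opp_involutive in H.
  change (winv [gB]) with [gb] in H; change (winv [gb]) with [gB] in H.
  rewrite <- !app_assoc in H; apply (weq_nil_rot _ (apow q)) in H.
  rewrite Z.opp_involutive; now rewrite <- !app_assoc in H.
Qed.

Section Relabelling.

(* A transducer with boolean state [st]: letters a^{+-1} are inverted while
   [st] holds, letters b^{+-1} are inverted iff [swap_b], and each letter
   b^{+-1} toggles [st] iff [twist]. *)
Variables swap_b twist : bool.

Definition relabel_gen (st : bool) (x : gen) : gen :=
  match x with
  | ga => if st then gA else ga
  | gA => if st then ga else gA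
  | gb => if swap_b then gB else gb
  | gB => if swap_b then gb else gB
  end.

Definition flip_after (st : bool) (x : gen) : bool :=
  match x with gb | gB => xorb twist st | _ => st end.

Fixpoint relabel (st : bool) (w : word) : word :=
  match w with
  | [] => []
  | x :: w' => relabel_gen st x :: relabel (flip_after st x) w'
  end.

Definition final_flip (st : bool) (w : word) : bool :=
  fold_left flip_after w st.

Lemma relabel_app st u v :
  relabel st (u ++ v) = relabel st u ++ relabel (final_flip st u) v.
Proof. revert st; induction u; intros st; simpl; [|rewrite IHu]; reflexivity. Qed.

Lemma final_flip_app st u v :
  final_flip st (u ++ v) = final_flip (final_flip st u) v.
Proof. apply fold_left_app. Qed.

Lemma relabelK st w : relabel st (relabel st w) = w.
Proof.
  revert st; induction w as [|x w IH]; intros st; [reflexivity|simpl].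
  replace (flip_after st (relabel_gen st x)) with (flip_after st x)
    by (unfold flip_after, relabel_gen; now destruct x, swap_b, st).
  rewrite IH; f_equal; unfold relabel_gen; now destruct x, swap_b, st.
Qed.

Lemma relabel_repeat st x n : flip_after st x = st ->
  relabel st (repeat x n) = repeat (relabel_gen st x) n /\
  final_flip st (repeat x n) = st.
Proof.
  intros Hx; induction n as [|n [IHw IHf]]; [split; reflexivity|].
  unfold final_flip in *; simpl; rewrite Hx, IHw, IHf; split; reflexivity.
Qed.

Lemma relabel_apow st z :
  relabel st (apow z) = apow (if st then - z else z)%Z /\ final_flip st (apow z) = st.
Proof.
  destruct (Z.le_ge_cases 0 z) as [Hz|Hz].
  - rewrite (apow_nonneg z Hz).
    destruct (relabel_repeat st ga (Z.to_nat z) eq_refl) as [-> ->].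
    split; [|reflexivity]; destruct st; simpl.
    + now rewrite apow_nonpos, Z.opp_involutive by lia.
    + now rewrite apow_nonneg.
  - rewrite (apow_nonpos z Hz).
    destruct (relabel_repeat st gA (Z.to_nat (- z)) eq_refl) as [-> ->].
    split; [|reflexivity]; destruct st; simpl.
    + now rewrite apow_nonneg by lia.
    + now rewrite apow_nonpos.
Qed.

Lemma relabel_bs_rel st p q :
  relabel st (bs_rel p q) =
    [relabel_gen st gb] ++ apow (if xorb twist st then - p else p)%Z ++
    [relabel_gen st gB] ++ apow (if st then q else - q)%Z
  /\ final_flip st (bs_rel p q) = st.
Proof.
  unfold bs_rel; rewrite !relabel_app, !final_flip_app.
  change (final_flip st [gb]) with (xorb twist st).
  destruct (relabel_apow (xorb twist st) p) as [-> ->].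
  change (final_flip (xorb twist st) [gB]) with (xorb twist (xorb twist st)).
  replace (xorb twist (xorb twist st)) with st by now destruct twist, st.
  destruct (relabel_apow st (- q)) as [-> ->].
  split; [|reflexivity].
  now rewrite Z.opp_involutive.
Qed.

Definition relabel_relator_trivial (p q p' q' : Z) : Prop :=
  forall st, weq (bs_rel p' q') (relabel st (bs_rel p q)) [].

Section RelatorImage.

Variables p q p' q' : Z.
Hypothesis relabel_rel : relabel_relator_trivial p q p' q'.

Lemma relabel_wstep st u v :
  wstep (bs_rel p q) u v -> weq (bs_rel p' q') (relabel st u) (relabel st v).
Proof.
  intros [u' v' x|u' v'].
  - rewrite !relabel_app; simpl; set (s := final_flip st u').
    replace (flip_after (flip_after s x) (ginv x)) with s
      by (unfold flip_after; now destruct x, twist, s).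
    replace (relabel_gen (flip_after s x) (ginv x)) with (ginv (relabel_gen s x))
      by (unfold flip_after, relabel_gen; now destruct x, twist, swap_b, s).
    apply rst_step, ws_free.
  - destruct (relabel_bs_rel (final_flip st u') p q) as [_ Hfin].
    rewrite !(relabel_app st u'), (relabel_app _ (bs_rel p q)), Hfin.
    apply weq_app; [apply rst_refl|].
    exact (weq_app _ _ [] _ _ (relabel_rel _) (rst_refl _ _ _)).
Qed.

Lemma relabel_weq st u v :
  weq (bs_rel p q) u v -> weq (bs_rel p' q') (relabel st u) (relabel st v).
Proof.
  induction 1.
  - now apply relabel_wstep.
  - apply rst_refl.
  - now apply rst_sym.
  - eapply rst_trans; eauto.
Qed.

End RelatorImage.

End Relabelling.

Lemma cls_eq p q u v : weq (bs_rel p q) u v -> cls p q u = cls p q v.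
Proof.
  intros H; apply subset_eq_compat.
  extensionality w; apply propositional_extensionality; split; intros H'.
  - eapply rst_trans; [apply rst_sym, H|exact H'].
  - eapply rst_trans; eauto.
Qed.

Lemma cls_inj p q u v : cls p q u = cls p q v -> weq (bs_rel p q) u v.
Proof.
  intros E; apply (f_equal (@proj1_sig _ _)) in E; simpl in E.
  rewrite E; apply rst_refl.
Qed.

Lemma cls_surj p q (g : BS p q) : exists w, g = cls p q w.
Proof.
  destruct g as [S [w Hw]].
  exists w; now apply subset_eq_compat.
Qed.

Definition rep p q (g : BS p q) : word :=
  proj1_sig (constructive_indefinite_description _ (cls_surj p q g)).

Lemma repK p q (g : BS p q) : cls p q (rep p q g) = g.
Proof. unfold rep; destruct constructive_indefinite_description; now simpl. Qed.

Definition relabel_BS (swap_b twist : bool) (p q p' q' : Z) (g : BS p q) : BS p' q' :=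
  cls p' q' (relabel swap_b twist false (rep p q g)).

Lemma relabel_BS_cls swap_b twist p q p' q' :
  relabel_relator_trivial swap_b twist p q p' q' ->
  forall w, relabel_BS swap_b twist p q p' q' (cls p q w) =
            cls p' q' (relabel swap_b twist false w).
Proof.
  intros H w; apply cls_eq, (relabel_weq _ _ _ _ _ _ H), (cls_inj p q), repK.
Qed.

Section CayleyRelabelling.

Variables (swap_b twist : bool) (p q p' q' : Z).
Hypothesis rel_pq : relabel_relator_trivial swap_b twist p q p' q'.
Hypothesis rel_p'q' : relabel_relator_trivial swap_b twist p' q' p q.

Lemma relabel_BSK (g : BS p q) :
  relabel_BS swap_b twist p' q' p q (relabel_BS swap_b twist p q p' q' g) = g.
Proof.
  destruct (cls_surj p q g) as [w ->].
  rewrite (relabel_BS_cls _ _ _ _ _ _ rel_pq), (relabel_BS_cls _ _ _ _ _ _ rel_p'q').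
  now rewrite relabelK.
Qed.

Lemma relabel_BS_adj g h :
  cayley_adj p q g h ->
  cayley_adj p' q' (relabel_BS swap_b twist p q p' q' g) (relabel_BS swap_b twist p q p' q' h).
Proof.
  intros [Hne [w [x [-> ->]]]]; split.
  - intros E; apply Hne; apply (f_equal (relabel_BS swap_b twist p' q' p q)) in E.
    now rewrite !relabel_BSK in E.
  - exists (relabel swap_b twist false w),
      (relabel_gen swap_b (final_flip twist false w) x).
    now rewrite !(relabel_BS_cls _ _ _ _ _ _ rel_pq), relabel_app.
Qed.

End CayleyRelabelling.

Lemma BS_dense_chordal_relabel swap_b twist p q p' q' eps k m :
  relabel_relator_trivial swap_b twist p q p' q' ->
  relabel_relator_trivial swap_b twist p' q' p q ->
  BS_dense_chordal p q eps k m -> BS_dense_chordal p' q' eps k m.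
Proof.
  intros H H'; apply dense_chordal_iso with
    (relabel_BS swap_b twist p q p' q') (relabel_BS swap_b twist p' q' p q);
    intros; now apply relabel_BSK || apply relabel_BS_adj.
Qed.

Lemma relabel_relator_swap p q : relabel_relator_trivial true false p q q p.
Proof.
  intros st; destruct (relabel_bs_rel true false st p q) as [-> _].
  destruct st; cbn [relabel_gen xorb]; rewrite (app_assoc [gB]);
    apply (weq_nil_rot _ ([gb] ++ _)); rewrite <- app_assoc.
  - apply weq_bs_rel.
  - pose proof (weq_bs_rel_opp q p) as H; unfold bs_rel in H |- *.
    now rewrite Z.opp_involutive in H.
Qed.

Lemma relabel_relator_twist p q : relabel_relator_trivial false true p q (- p) q.
Proof.
  intros st; destruct (relabel_bs_rel false true st p q) as [-> _].
  destruct st; cbn [relabel_gen xorb].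
  - pose proof (weq_bs_rel_opp (- p) q) as H; unfold bs_rel in H |- *.
    now rewrite !Z.opp_involutive in H.
  - apply weq_bs_rel.
Qed.

Lemma BS_dense_chordal_swap p q eps k m :
  BS_dense_chordal p q eps k m <-> BS_dense_chordal q p eps k m.
Proof. split; apply BS_dense_chordal_relabel with true false; apply relabel_relator_swap. Qed.

Lemma BS_dense_chordal_oppl p q eps k m :
  BS_dense_chordal p q eps k m <-> BS_dense_chordal (- p) q eps k m.
Proof.
  pose proof (relabel_relator_twist (- p) q) as H; rewrite Z.opp_involutive in H.
  split; apply BS_dense_chordal_relabel with false true;
    first [apply relabel_relator_twist | exact H].
Qed.

Lemma BS_dense_chordal_oppr p q eps k m :
  BS_dense_chordal p q eps k m <-> BS_dense_chordal p (- q) eps k m.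
Proof.
  rewrite BS_dense_chordal_swap, BS_dense_chordal_oppl.
  apply BS_dense_chordal_swap.
Qed.

Theorem proposition2 (s t : nat) (eps k m : R) :
  0 < eps -> 0 < k -> 0 < m ->
  let S := Z.of_nat s in
  let T := Z.of_nat t in
  (BS_dense_chordal S T eps k m <-> BS_dense_chordal (- S) T eps k m) /\
  (BS_dense_chordal S T eps k m <-> BS_dense_chordal S (- T) eps k m) /\
  (BS_dense_chordal S T eps k m <-> BS_dense_chordal (- S) (- T) eps k m) /\
  (BS_dense_chordal S T eps k m <-> BS_dense_chordal T S eps k m) /\
  (BS_dense_chordal S T eps k m <-> BS_dense_chordal (- T) S eps k m) /\
  (BS_dense_chordal S T eps k m <-> BS_dense_chordal T (- S) eps k m) /\
  (BS_dense_chordal S T eps k m <-> BS_dense_chordal (- T) (- S) eps k m).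
Proof.
  intros _ _ _ S T.
  pose proof (BS_dense_chordal_oppl S T eps k m).
  pose proof (BS_dense_chordal_oppr S T eps k m).
  pose proof (BS_dense_chordal_oppr (- S) T eps k m).
  pose proof (BS_dense_chordal_swap S T eps k m).
  pose proof (BS_dense_chordal_oppl T S eps k m).
  pose proof (BS_dense_chordal_oppr T S eps k m).
  pose proof (BS_dense_chordal_oppl T (- S) eps k m).
  tauto.
Qed.
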